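(* Let $P$ and $S$ be strings over a totally ordered alphabet and let $q\ge 0$ be an integer such that both $P$ and $S$ have length at least $q+1$. Assume that $\mathcal{PP}_P(i)=\mathcal{PP}_S(i)$ for all $1\le i\le q$, i.e. $P[1..q]$ and $S[1..q]$ have the same prefix-parent representations. Then $P[1..q+1]$ and $S[1..q+1]$ have the same prefix-parent representations (i.e. additionally $\mathcal{PP}_P(q+1)=\mathcal{PP}_S(q+1)$) if and only if $$S[\mathcal{PP}_P(q+1)] \preceq S[q+1] \preceq S[\mathcal{PC}_P(q+1)].$$
   Context: A string $S$ is a finite sequence $S[1],S[2],\dots$ over an alphabet $\Sigma$ with a total order $<$; $S[i..j]$ denotes the substring $S[i]S[i+1]\cdots S[j]$ (empty if $i>j$). For positions $i,j$ of $S$, write $S[i]\prec S[j]$ iff either $S[i]<S[j]$, or $S[i]$ and $S[j]$ have the same value and $i<j$; write $S[i]\preceq S[j]$ iff $S[i]\prec S[j]$ or $i=j$. Minimum elements are taken with respect to $\prec$ (so among equal minimal values the leftmost position is the minimum). Prefix-parent representation: $\mathcal{PP}_S(i)=\max\{j: 1\le j<i,\ S[j]\prec S[i]\}$ if such $j$ exists, and $\mathcal{PP}_S(i)=i$ otherwise. Prefix-child representation: $\mathcal{PC}_S(1)=1$, and for $i\ge 2$: if $\mathcal{PP}_S(i)=i$, then $\mathcal{PC}_S(i)$ is the index $j\in[1,i-1]$ such that $S[j]$ is the minimum of $S[1..i-1]$; if $\mathcal{PP}_S(i)=i-1$, then $\mathcal{PC}_S(i)=i$; if $\mathcal{PP}_S(i)<i-1$,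 then $\mathcal{PC}_S(i)$ is the index $j$ with $\mathcal{PP}_S(i)<j<i$ such that $S[j]$ is the minimum of $S[\mathcal{PP}_S(i)+1..i-1]$. *)

(* Strings are sequences over a totally ordered alphabet
   T : orderType d, indexed from 1: S[i] = nth x0 S (i-1).  The default x0
   is irrelevant for in-range positions. *)
From HB Require Import structures.
From mathcomp Require Import all_boot all_order.
Set Implicit Arguments. Unset Strict Implicit. Unset Printing Implicit Defensive.
Import Order.TTheory.
Local Open Scope order_scope.

Section Strings.
Context {d : Order.disp_t} {T : orderType d} (x0 : T).

Definition chr (S : seq T) (i : nat) : T := nth x0 S i.-1.

Definition prec (S : seq T) (i j : nat) : bool :=
  (chr S i < chr S j) || ((chr S i == chr S j) && (i < j)%N).

Definition preceq (S : seq T) (i j : nat) : bool := prec S i j || (i == j).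

Definition PP (S : seq T) (i : nat) : nat :=
  let m := \max_(1 <= j < i | prec S j i) j in
  if m == 0%N then i else m.

(* index of the ≺-minimum of S[a..b] (for a <= b) *)
Definition minpos (S : seq T) (a b : nat) : nat :=
  foldl (fun m k => if prec S k m then k else m) a (iota a.+1 (b - a)).

Definition PC (S : seq T) (i : nat) : nat :=
  if (i <= 1)%N then 1%N
  else if PP S i == i then minpos S 1 i.-1
  else if PP S i == i.-1 then i
  else minpos S (PP S i).+1 i.-1.

End Strings.

From Pilot Require Import Defs.
From HB Require Import structures.
From mathcomp Require Import all_boot all_order.
Import Order.TTheory.
Set Implicit Arguments. Unset Strict Implicit.

(* The relation S[i] ≺ S[j] is a strict total order on the
   positions of S.  Write lowPP S i for PP_S(i) when i has a prefix-parent
   and 0 otherwise; then PP_S(i) = p holds iff S[p] ⪯ S[i] and S[i] ≺ S[j]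
   for every j strictly between the window base (p, or 0 if p = i) and i
   (PP_eqP).  Both "c is the ≺-minimum of the window (a, b]" and "i is
   smaller than everything in (a, i)" are expressible through lowPP alone
   (window_min, PP_window), so such minima transfer from P to S as soon as
   the prefix-parent representations of P[1..q] and S[1..q] agree
   (window_min_transfer).  Finally PC_P(q+1) is, by definition, either q+1
   (empty window) or the ≺_P-minimum of the window of q+1, hence also its
   ≺_S-minimum, and "S[q+1] ≺ everything in the window" collapses to
   S[q+1] ⪯ S[PC_P(q+1)].  Plugging this into PP_eqP for S gives theorem1. *)

Section PrefixParent.
Context {d : Order.disp_t} {T : orderType d} (x0 : T) (S : seq T).

Local Notation prec := (prec x0 S).
Local Notation preceq := (preceq x0 S).
Local Notation PP := (PP x0 S).

Lemma prec_trans i j k : prec i j -> prec j k -> prec i k.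
Proof.
rewrite /prec => /orP[xy | /andP[/eqP exy ij]] /orP[yz | /andP[/eqP eyz jk]].
- by rewrite (lt_trans xy yz).
- by rewrite -eyz xy.
- by rewrite exy yz.
- by rewrite exy eyz eqxx (ltn_trans ij jk) orbT.
Qed.

Lemma prec_asym i j : prec i j -> ~~ prec j i.
Proof.
rewrite /prec => /orP[xy | /andP[/eqP exy ij]].
- by rewrite negb_or (lt_gtF xy) eq_sym (lt_eqF xy).
- by rewrite exy ltxx eqxx /= -leqNgt ltnW.
Qed.

Lemma prec_total i j : i != j -> ~~ prec j i -> prec i j.
Proof.
rewrite /prec => nij; case: (ltgtP (chr x0 S i) (chr x0 S j)) => //= _.
rewrite -leqNgt leq_eqVlt => /orP[/eqP eij | -> //].
by rewrite eij eqxx in nij.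
Qed.

Lemma preceq_refl i : preceq i i.
Proof. by rewrite /Defs.preceq eqxx orbT. Qed.

Lemma preceqE i j : i != j -> preceq i j = prec i j.
Proof. by rewrite /Defs.preceq => /negPf->; rewrite orbF. Qed.

Lemma prec_preceq i j k : prec i j -> preceq j k -> prec i k.
Proof. by move=> ij /orP[jk | /eqP <-] //; apply: prec_trans ij jk. Qed.

Variant PP_spec (i : nat) : nat -> Prop :=
  | PP_root of (forall j, (1 <= j < i)%N -> ~~ prec j i) : PP_spec i i
  | PP_parent p of (1 <= p < i)%N & prec p i
      & (forall j, (p < j < i)%N -> ~~ prec j i) : PP_spec i p.

Lemma PPP i : PP_spec i (PP i).
Proof.
rewrite /Defs.PP; set m := \max_(1 <= j < i | prec j i) j.
have m_ub j : (1 <= j < i)%N -> prec j i -> (j <= m)%N.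
  by move=> jr ji; apply: (bigmaxn_sup_seq j) => //; rewrite mem_index_iota.
have : (m == 0) || [&& (1 <= m < i)%N & prec m i].
  rewrite /m big_seq_cond.
  apply: (big_ind (fun x => (x == 0) || [&& (1 <= x < i)%N & prec x i])).
  - by rewrite eqxx.
  - by move=> x y hx hy; case: (leqP x y).
  - by move=> j /andP[]; rewrite mem_index_iota => -> ->; rewrite orbT.
case/orP => [/eqP m0 | /andP[mr mi]].
  rewrite m0 eqxx; constructor => j jr; apply/negP => ji.
  by move: (m_ub j jr ji); rewrite m0 leqn0 => /eqP j0; rewrite j0 in jr.
have -> : (m == 0) = false by case/andP: mr => m1 _; apply/negbTE; rewrite -lt0n.
constructor => // j /andP[mj ji]; apply/negP => pj.
have jr : (1 <= j < i)%N by rewrite ji (leq_trans _ (ltnW mj)) //; case/andP: mr.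
by move: (m_ub j jr pj); rewrite leqNgt mj.
Qed.

Lemma PP_ge i j : (1 <= j < i)%N -> prec j i -> (j <= PP i < i)%N.
Proof.
move=> jr ji; case: PPP => [noprec | p pr _ right_p].
  by move: (noprec j jr); rewrite ji.
rewrite (proj2 (andP pr)) andbT leqNgt; apply/negP => pj.
by move: (right_p j); rewrite pj (proj2 (andP jr)) ji => /(_ isT).
Qed.

(* The left end of the window of i: PP_S(i), or 0 when i has no parent. *)
Definition lowPP (i : nat) : nat := if PP i == i then 0 else PP i.

Lemma lowPP_ltn i : (0 < i)%N -> (lowPP i < i)%N.
Proof.
move=> i0; rewrite /lowPP.
by case: PPP => [|p /andP[_ pi] _ _]; rewrite ?eqxx // ltn_eqF.
Qed.

Lemma lowPP_parent i : (1 <= lowPP i)%N -> lowPP i = PP i /\ prec (PP i) i.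
Proof.
rewrite /lowPP; case: PPP => [|p /andP[_ pi] pprec _]; rewrite ?eqxx //.
by rewrite (ltn_eqF pi).
Qed.

Lemma PP_window a i : (a < i)%N ->
  (forall j, (a < j < i)%N -> prec i j) <-> (lowPP i <= a)%N.
Proof.
move=> ai; rewrite /lowPP; split => [smaller | low j /andP[aj ji]].
  case: PPP => [|p /andP[_ pi] pprec _]; rewrite ?eqxx // (ltn_eqF pi).
  rewrite leqNgt; apply/negP => ap.
  by move: (smaller p); rewrite ap pi => /(_ isT) /prec_asym; rewrite pprec.
apply: prec_total; first by rewrite neq_ltn ji orbT.
apply/negP => jprec; have jr : (1 <= j < i)%N by rewrite ji (leq_ltn_trans _ aj).
have /andP[jP Pi] := PP_ge jr jprec.
by move: low; rewrite (ltn_eqF Pi) leqNgt (leq_trans aj jP).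
Qed.

Lemma prec_suffix p b : (1 <= p)%N ->
  (forall j, (p < j <= b)%N -> prec p j) <->
  (forall j, (p < j <= b)%N -> (p <= lowPP j)%N).
Proof.
move=> p1; split => [smaller j jr | low].
  have /andP[pj jb] := jr.
  have pr : (1 <= p < j)%N by rewrite p1 pj.
  have /andP[pP Pj] := PP_ge pr (smaller j jr).
  by rewrite /lowPP (ltn_eqF Pj).
(* Strong induction on j: the parent PP j lies in [p, j), and either equals p
   or is itself ≻ p, so p ≺ PP j ≺ j. *)
move=> j; elim: j {-2}j (leqnn j) => [|n IH] j jn jr.
  by move: jr; rewrite leqn0 in jn; rewrite (eqP jn).
have /andP[pj jb] := jr.
have [eP Pj] := lowPP_parent (leq_trans p1 (low j jr)).
have Plt : (PP j < j)%N by rewrite -eP lowPP_ltn // (leq_ltn_trans _ pj).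
have := low j jr; rewrite eP leq_eqVlt => /orP[/eqP -> // | pP].
apply: prec_trans Pj; apply: IH; first by rewrite -ltnS (leq_trans Plt jn).
by rewrite pP (leq_trans (ltnW Plt) jb).
Qed.

Lemma window_min a b c : (a < c <= b)%N ->
  (forall k, (a < k <= b)%N -> preceq c k) <->
  (lowPP c <= a)%N /\ (forall j, (c < j <= b)%N -> (c <= lowPP j)%N).
Proof.
move=> cr; have /andP[ac cb] := cr; have c1 : (1 <= c)%N by rewrite (leq_ltn_trans _ ac).
split=> [cmin | [left right] k /andP[ak kb]].
  split; first apply/(PP_window ac) => j /andP[aj jc].
    by rewrite -preceqE ?(gtn_eqF jc) //; apply: cmin; rewrite aj (leq_trans (ltnW jc)).
  apply/(prec_suffix b c1) => j /andP[cj jb].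
  by rewrite -preceqE ?(ltn_eqF cj) //; apply: cmin; rewrite jb (ltn_trans ac).
case: (ltngtP k c) => [kc | ck | ->]; last exact: preceq_refl.
  by rewrite preceqE ?(gtn_eqF kc) //; apply: (proj2 (PP_window ac) left); rewrite ak.
by rewrite preceqE ?(ltn_eqF ck) //; apply: (proj2 (prec_suffix b c1) right); rewrite ck.
Qed.

Lemma PP_eqP p i : (1 <= p <= i)%N ->
  PP i = p <->
  preceq p i /\ (forall j, ((if p == i then 0 else p) < j < i)%N -> prec i j).
Proof.
case/andP => p1; rewrite leq_eqVlt => /orP[/eqP <- | pi].
  rewrite eqxx; apply: (@iff_trans _ (lowPP p <= 0)%N).
    rewrite leqn0 /lowPP; split=> [-> | ]; first by rewrite eqxx.
    case: PPP => [// | r /andP[r1 _] _ _]; case: (r =P p) => [-> // | _ /eqP r0].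
    by rewrite r0 in r1.
  split=> [low | [_ /(PP_window p1)] //].
  by split; [exact: preceq_refl | apply/(PP_window p1)].
rewrite (ltn_eqF pi) preceqE ?(ltn_eqF pi) //.
split=> [Pp | [pprec /(PP_window pi) low]].
  have low : lowPP i = p by rewrite /lowPP Pp (ltn_eqF pi).
  have low1 : (1 <= lowPP i)%N by rewrite low.
  have [_ Pprec] := lowPP_parent low1.
  by split; [rewrite -Pp | apply/(PP_window pi); rewrite low].
have pr : (1 <= p < i)%N by rewrite p1 pi.
have /andP[pP Pi] := PP_ge pr pprec.
by move: low; rewrite /lowPP (ltn_eqF Pi) => Pp; apply/eqP; rewrite eqn_leq Pp.
Qed.

Lemma minpos_spec a b : (a <= b)%N ->
  (a <= minpos x0 S a b <= b)%N /\
  (forall k, (a <= k <= b)%N -> preceq (minpos x0 S a b) k).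
Proof.
move=> ab; rewrite /minpos.
suff scan n s m : (a <= m < s)%N -> (forall k, (a <= k < s)%N -> preceq m k) ->
  let r := foldl (fun m k => if prec k m then k else m) m (iota s n) in
  (a <= r < s + n)%N /\ (forall k, (a <= k < s + n)%N -> preceq r k).
  have base k : (a <= k < a.+1)%N -> preceq a k.
    by rewrite ltnS -eqn_leq => /eqP <-; apply: preceq_refl.
  have aa : (a <= a < a.+1)%N by rewrite leqnn ltnSn.
  case: (scan (b - a) a.+1 a aa base) => r_range r_min.
  by rewrite addSn subnKC // ltnS in r_range r_min.
elim: n s m => [|n IH] s m /andP[am ms] mmin /=; first by rewrite addn0 am ms.
rewrite addnS -addSn; apply: IH => [|k /andP[ak]].
  by case: ifP => _; rewrite ltnS ?leqnn ?(ltnW ms) ?(leq_trans am (ltnW ms)) ?am.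
rewrite ltnS leq_eqVlt => /orP[/eqP -> | ks]; case: ifP => sm.
- exact: preceq_refl.
- by rewrite preceqE ?(ltn_eqF ms) //; apply: prec_total; rewrite ?sm ?(ltn_eqF ms).
- rewrite preceqE ?(gtn_eqF ks) //; apply: prec_preceq sm (mmin k _).
  by rewrite ak.
- by apply: mmin; rewrite ak.
Qed.

Lemma PC_lowPP i : (0 < i)%N ->
  PC x0 S i = if lowPP i == i.-1 then i else minpos x0 S (lowPP i).+1 i.-1.
Proof.
case: i => // -[|i] _.
  by rewrite /PC /lowPP; case: PPP => [|p /andP[/leq_trans h /h]].
by rewrite /PC /lowPP /=; case: (PP i.+2 =P i.+2).
Qed.

Lemma prec_window_min a b c i : (a < c <= b)%N ->
  (forall k, (a < k <= b)%N -> preceq c k) -> i != c ->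
  (forall j, (a < j <= b)%N -> prec i j) <-> preceq i c.
Proof.
move=> cr cmin ic; rewrite preceqE //.
by split=> [/(_ c cr) | ic' j jr] //; apply: prec_preceq ic' (cmin j jr).
Qed.

End PrefixParent.

Section Transfer.
Context {d : Order.disp_t} {T : orderType d} (x0 : T) (P S : seq T) (q : nat).
Hypothesis same_PP : forall i, (1 <= i <= q)%N -> PP x0 P i = PP x0 S i.

Lemma window_min_transfer a c : (a < c <= q)%N ->
  (forall k, (a < k <= q)%N -> preceq x0 P c k) ->
  (forall k, (a < k <= q)%N -> preceq x0 S c k).
Proof.
move=> cr Pmin; have /andP[ac cq] := cr.
have same_low j : (1 <= j <= q)%N -> lowPP x0 P j = lowPP x0 S j.
  by move=> jr; rewrite /lowPP same_PP.
have [lowP rightP] := proj1 (window_min x0 P cr) Pmin.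
apply/(window_min x0 S cr); split=> [|j jr].
  by rewrite -same_low // cq (leq_ltn_trans _ ac).
have /andP[cj jq] := jr.
by rewrite -same_low ?rightP // jq (leq_ltn_trans _ cj).
Qed.

Lemma window_PC :
  (forall j, (lowPP x0 P q.+1 < j < q.+1)%N -> prec x0 S q.+1 j) <->
  preceq x0 S q.+1 (PC x0 P q.+1).
Proof.
rewrite PC_lowPP //=; set a := lowPP x0 P q.+1.
have := lowPP_ltn x0 P (ltn0Sn q); rewrite -/a ltnS leq_eqVlt.
case/orP => [/eqP aq | aq]; first rewrite aq eqxx preceq_refl.
  by split=> // _ j /andP[/leq_trans h /h]; rewrite ltnn.
rewrite (ltn_eqF aq); set c := minpos x0 P a.+1 q.
have [cr cmin] := minpos_spec x0 P aq; rewrite -/c in cr cmin.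
have cminS := window_min_transfer cr cmin.
have cq1 : (c < q.+1)%N by rewrite ltnS; case/andP: cr.
apply: (iff_trans _ (prec_window_min cr cminS (negbT (gtn_eqF cq1)))).
by split=> h j /andP[aj jq]; apply: h; rewrite aj.
Qed.

End Transfer.

Theorem theorem1 (d : Order.disp_t) (T : orderType d) (x0 : T)
    (P S : seq T) (q : nat) :
  (q.+1 <= size P)%N -> (q.+1 <= size S)%N ->
  (forall i, (1 <= i <= q)%N -> PP x0 P i = PP x0 S i) ->
  ((forall i, (1 <= i <= q.+1)%N -> PP x0 P i = PP x0 S i) <->
   (preceq x0 S (PP x0 P q.+1) q.+1 && preceq x0 S q.+1 (PC x0 P q.+1))).
Proof.
move=> _ _ same_PP.
have last_only : (forall i, (1 <= i <= q.+1)%N -> PP x0 P i = PP x0 S i) <->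
    PP x0 S q.+1 = PP x0 P q.+1.
  split=> [agree | last_eq i /andP[i1]]; first by rewrite agree ?leqnn.
  by rewrite leq_eqVlt ltnS => /orP[/eqP -> | iq]; last by apply: same_PP; rewrite i1.
have p_range : (1 <= PP x0 P q.+1 <= q.+1)%N.
  by case: PPP => [|p /andP[-> /ltnW]] //; rewrite leqnn.
apply: (iff_trans last_only); apply: (iff_trans (PP_eqP x0 S p_range)).
have window := window_PC same_PP.
by split=> [[-> /window ->] | /andP[-> /window]].
Qed.
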